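(* Let $(X,S_b)$ be an $S_b$-metric space with $b\geq 1$, let $x_1,x_2\in X$, and let $f:X\to X$ be a self-mapping for which there exist $\alpha\in(0,1)$ and a non-decreasing function $\varphi:(0,\infty)\to(1,\infty)$ such that for all $x\in X\setminus\{x_1,x_2\}$, $$S_b(x,x,fx)>0 \implies \varphi\big(S_b(x,x,fx)\big)\leq \big[\varphi\big(S_b(x,x,x_1)+S_b(x,x,x_2)\big)\big]^{\alpha}$$ (i.e. $f$ is a Jleli-Samet type $E_{x_1,x_2}$-$S_b$-contraction). Let $$r=\inf\{S_b(x,x,fx): x\neq fx,\ x\in X\}.$$ If $fx_1=x_1$ and $fx_2=x_2$, then $f$ fixes the ellipse $E^{S_b}_r(x_1,x_2)=\{x\in X: S_b(x,x,x_1)+S_b(x,x,x_2)=r\}$, i.e. $fx=x$ for every $x\in E^{S_b}_r(x_1,x_2)$.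
   Context: An $S_b$-metric space $(X,S_b)$ with constant $b\geq 1$ is a nonempty set $X$ with a function $S_b:X\times X\times X\to[0,\infty)$ such that for all $x,y,z,a\in X$: (1) $S_b(x,y,z)=0$ if and only if $x=y=z$; (2) $S_b(x,y,z)\leq b[S_b(x,x,a)+S_b(y,y,a)+S_b(z,z,a)]$. A mapping $f$ fixes a set $\mathcal{F}\subseteq X$ if $\mathcal{F}$ is contained in the fixed point set $\{x\in X: fx=x\}$. *)

From Stdlib Require Import Reals.
Open Scope R_scope.

Definition is_Sb_metric (X : Type) (b : R) (S : X -> X -> X -> R) : Prop :=
  1 <= b /\
  (forall x y z, 0 <= S x y z) /\
  (forall x y z, S x y z = 0 <-> (x = y /\ y = z)) /\
  (forall x y z a, S x y z <= b * (S x x a + S y y a + S z z a)).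

Definition is_inf (P : R -> Prop) (r : R) : Prop :=
  (forall t, P t -> r <= t) /\ (forall m, (forall t, P t -> m <= t) -> m <= r).

Definition Sb_ellipse (X : Type) (S : X -> X -> X -> R) (r : R) (x1 x2 : X) : X -> Prop :=
  fun x => S x x x1 + S x x x2 = r.

(* If some point x of the ellipse were moved by f, it would differ from x1 and
   x2, so both the displacement s = S(x,x,fx) and the radius r are positive,
   and r <= s by definition of r. The contraction condition then gives
   phi s <= (phi r)^alpha < phi r <= phi s, since phi r > 1 and phi is
   non-decreasing. *)

From Stdlib Require Import Reals Lra Classical.
Open Scope R_scope.

Lemma Sb_pos (X : Type) (b : R) (S : X -> X -> X -> R) (x z : X) :
  is_Sb_metric X b S -> x <> z -> 0 < S x x z.
Proof.
  intros [_ [Hnn [H0 _]]] Hxz.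
  destruct (Rle_lt_or_eq_dec 0 _ (Hnn x x z)) as [Hlt | Heq]; [exact Hlt |].
  symmetry in Heq; apply H0 in Heq; destruct Heq as [_ Heq]; contradiction.
Qed.

Lemma Rpower_lt_base (a alpha : R) : 1 < a -> 0 < alpha < 1 -> Rpower a alpha < a.
Proof.
  intros Ha Halpha.
  rewrite <- (Rpower_1 a) at 2 by lra.
  apply Rpower_lt; lra.
Qed.

Lemma Rpower_phi_lt_phi (phi : R -> R) (alpha s t : R) :
  (forall t, 0 < t -> 1 < phi t) ->
  (forall s t, 0 < s -> s <= t -> phi s <= phi t) ->
  0 < alpha < 1 -> 0 < t -> t <= s ->
  Rpower (phi t) alpha < phi s.
Proof.
  intros Hphi Hmono Halpha Ht Hts.
  pose proof (Rpower_lt_base (phi t) alpha (Hphi t Ht) Halpha).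
  pose proof (Hmono t s Ht Hts).
  lra.
Qed.

Theorem theorem2p8 (X : Type) (b : R) (S : X -> X -> X -> R)
  (x1 x2 : X) (f : X -> X) (alpha : R) (phi : R -> R) (r : R) :
  is_Sb_metric X b S ->
  0 < alpha < 1 ->
  (forall t, 0 < t -> 1 < phi t) ->
  (forall s t, 0 < s -> s <= t -> phi s <= phi t) ->
  (forall x, x <> x1 -> x <> x2 -> 0 < S x x (f x) ->
     phi (S x x (f x)) <= Rpower (phi (S x x x1 + S x x x2)) alpha) ->
  is_inf (fun t => exists x, x <> f x /\ t = S x x (f x)) r ->
  f x1 = x1 -> f x2 = x2 ->
  forall x, Sb_ellipse X S r x1 x2 x -> f x = x.
Proof.
  intros HS Halpha Hphi Hmono Hcontr [Hr_lb _] F1 F2 x Hx.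
  unfold Sb_ellipse in Hx.
  apply NNPP; intro Hmoved.
  assert (Hx1 : x <> x1) by (intro E; subst; contradiction).
  assert (Hx2 : x <> x2) by (intro E; subst; contradiction).
  assert (Hdisp : 0 < S x x (f x)) by (apply (Sb_pos X b); auto).
  assert (Hr_disp : r <= S x x (f x)) by (apply Hr_lb; exists x; auto).
  assert (Hr : 0 < r).
  { pose proof (Sb_pos X b S x x1 HS Hx1).
    pose proof (Sb_pos X b S x x2 HS Hx2).
    lra. }
  pose proof (Hcontr x Hx1 Hx2 Hdisp) as Hle; rewrite Hx in Hle.
  pose proof (Rpower_phi_lt_phi phi alpha _ _ Hphi Hmono Halpha Hr Hr_disp).
  lra.
Qed.
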